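(* Let $P$ be a closed polygonal curve embedded in $\mathbb{R}^3$, whose knot type $K$ has genus $g(K)$. If $t$ is the number of triangles in a triangulated oriented PL surface $\Sigma$ embedded in $\mathbb{R}^3$ whose boundary is a PL subdivision of $P$, then $t \ge 4g(K) + 1$.
   Context: The genus $g(K)$ of a knot $K$ is the minimal genus of a compact connected orientable surface embedded in $\mathbb{R}^3$ whose boundary is the knot. A triangulated PL surface is a 2-dimensional simplicial complex, realized linearly on each triangle in $\mathbb{R}^3$, which is a 2-manifold with boundary. ''Boundary is a PL subdivision of $P$'' means the manifold boundary of the surface is $P$ as a set, possibly with extra vertices inserted on the edges of $P$. *)

From Stdlib Require Import Reals List Arith ZArith Relations Bool.
Import ListNotations.
Open Scope R_scope.

Record pt := mkpt { px : R; py : R; pz : R }.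

Definition padd (p q : pt) : pt := mkpt (px p + px q) (py p + py q) (pz p + pz q).
Definition pscale (r : R) (p : pt) : pt := mkpt (r * px p) (r * py p) (r * pz p).
Definition psub (p q : pt) : pt := padd p (pscale (-1) q).
Definition origin : pt := mkpt 0 0 0.
Definition cross (u v : pt) : pt :=
  mkpt (py u * pz v - pz u * py v) (pz u * px v - px u * pz v) (px u * py v - py u * px v).

Definition lincomb (w : list R) (l : list pt) : pt :=
  fold_right (fun rp acc => padd (pscale (fst rp) (snd rp)) acc) origin (combine w l).

Definition in_hull (l : list pt) (x : pt) : Prop :=
  exists w : list R, length w = length l /\ Forall (fun r => 0 <= r) w /\
    fold_right Rplus 0 w = 1 /\ x = lincomb w l.

Definition in_seg (a b x : pt) : Prop := in_hull [a; b] x.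

Definition noncollinear (a b c : pt) : Prop := cross (psub b a) (psub c a) <> origin.

Definition pvert (Q : list pt) (i : nat) : pt := nth (i mod length Q) Q origin.

Definition polygon_set (Q : list pt) (x : pt) : Prop :=
  exists i, (i < length Q)%nat /\ in_seg (pvert Q i) (pvert Q (S i)) x.

Definition embedded_polygon (Q : list pt) : Prop :=
  let m := length Q in
  (3 <= m)%nat /\
  (forall i j, (i < m)%nat -> (j < m)%nat -> i <> j -> pvert Q i <> pvert Q j) /\
  (forall i j, (i < m)%nat -> (j < m)%nat -> i <> j ->
     forall x, in_seg (pvert Q i) (pvert Q (S i)) x ->
               in_seg (pvert Q j) (pvert Q (S j)) x ->
       (j = (S i) mod m /\ x = pvert Q j) \/ (i = (S j) mod m /\ x = pvert Q i)).

(** Elementary Delta-move (Reidemeister): insert a new vertex [c] between the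
    consecutive vertices [a = Q_i] and [b = Q_(i+1)] where the triangle [abc]
    meets the polygon exactly in the edge [ab]. *)
Definition delta_insert (Q Q' : list pt) : Prop :=
  exists i c, (i < length Q)%nat /\
    Q' = firstn (S i) Q ++ c :: skipn (S i) Q /\
    (forall x, (in_hull [pvert Q i; pvert Q (S i); c] x /\ polygon_set Q x) <->
               in_seg (pvert Q i) (pvert Q (S i)) x).

Definition poly_rotate (Q Q' : list pt) : Prop :=
  exists k, Q' = skipn k Q ++ firstn k Q.

Definition knot_step (Q Q' : list pt) : Prop :=
  embedded_polygon Q /\ embedded_polygon Q' /\
  (delta_insert Q Q' \/ poly_rotate Q Q' \/ Q' = rev Q).

Definition knot_equiv : list pt -> list pt -> Prop := clos_refl_sym_trans _ knot_step.

(** * Triangulated PL surfaces in R^3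
    A surface is given by a number [nv] of vertices, their positions [vert]
    (indices [0..nv-1]) and a list of triangles (triples of vertex indices). *)
Definition tri_list (T : nat * nat * nat) : list nat :=
  match T with (a, b, c) => [a; b; c] end.

Definition tri_has (T : nat * nat * nat) (v : nat) : bool :=
  existsb (Nat.eqb v) (tri_list T).

Definition common_verts (T1 T2 : nat * nat * nat) : list nat :=
  filter (tri_has T2) (tri_list T1).

Definition edge_count (tris : list (nat * nat * nat)) (a b : nat) : nat :=
  length (filter (fun T => andb (tri_has T a) (tri_has T b)) tris).

Definition link_adj (tris : list (nat * nat * nat)) (v x y : nat) : Prop :=
  exists T, In T tris /\ tri_has T v = true /\ tri_has T x = true /\
            tri_has T y = true /\ x <> v /\ y <> v /\ x <> y.

Definition is_tri_surface (nv : nat) (vert : nat -> pt)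
    (tris : list (nat * nat * nat)) : Prop :=
  (forall a b c, In (a, b, c) tris ->
     (a < nv)%nat /\ (b < nv)%nat /\ (c < nv)%nat /\
     noncollinear (vert a) (vert b) (vert c)) /\
  (forall u v, (u < nv)%nat -> (v < nv)%nat -> vert u = vert v -> u = v) /\
  (forall v, (v < nv)%nat -> exists T, In T tris /\ tri_has T v = true) /\
  (forall i j, (i < length tris)%nat -> (j < length tris)%nat -> i <> j ->
     exists v, tri_has (nth i tris (0,0,0)%nat) v <> tri_has (nth j tris (0,0,0)%nat) v) /\
  (* linear realization is a geometric simplicial complex (embedded) *)
  (forall T1 T2, In T1 tris -> In T2 tris -> forall x,
     (in_hull (map vert (tri_list T1)) x /\ in_hull (map vert (tri_list T2)) x) <->
     in_hull (map vert (common_verts T1 T2)) x) /\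
  (* 2-manifold with boundary: every edge lies in at most two triangles and
     the link of every vertex is connected (hence an arc or a circle) *)
  (forall a b, a <> b -> (edge_count tris a b <= 2)%nat) /\
  (forall v x y, (v < nv)%nat -> v <> x -> v <> y ->
     (0 < edge_count tris v x)%nat -> (0 < edge_count tris v y)%nat ->
     clos_refl_trans _ (link_adj tris v) x y).

Definition surface_boundary (vert : nat -> pt) (tris : list (nat * nat * nat))
    (x : pt) : Prop :=
  exists a b, a <> b /\ edge_count tris a b = 1%nat /\ in_seg (vert a) (vert b) x.

Definition dir_edges (T : nat * nat * nat) (o : bool) : list (nat * nat) :=
  match T with (a, b, c) =>
    if o then [(a, b); (b, c); (c, a)] else [(b, a); (c, b); (a, c)] end.

Definition oriented_surface (tris : list (nat * nat * nat)) : Prop :=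
  exists o : nat -> bool,
    forall i j, (i < length tris)%nat -> (j < length tris)%nat -> i <> j ->
      forall e, In e (dir_edges (nth i tris (0,0,0)%nat) (o i)) ->
                ~ In e (dir_edges (nth j tris (0,0,0)%nat) (o j)).

Definition connected_surface (nv : nat) (tris : list (nat * nat * nat)) : Prop :=
  forall a b, (a < nv)%nat -> (b < nv)%nat ->
    clos_refl_trans _ (fun x y => exists T, In T tris /\ tri_has T x = true /\
                                            tri_has T y = true) a b.

Definition pair_eq_dec : forall x y : nat * nat, {x = y} + {x <> y}.
Proof. decide equality; apply Nat.eq_dec. Defined.

Definition unord_edges (T : nat * nat * nat) : list (nat * nat) :=
  match T with (a, b, c) =>
    [(Nat.min a b, Nat.max a b); (Nat.min b c, Nat.max b c); (Nat.min a c, Nat.max a c)] end.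

Definition num_edges (tris : list (nat * nat * nat)) : nat :=
  length (nodup pair_eq_dec (flat_map unord_edges tris)).

Definition euler_char (nv : nat) (tris : list (nat * nat * nat)) : Z :=
  (Z.of_nat nv - Z.of_nat (num_edges tris) + Z.of_nat (length tris))%Z.

(** genus of a compact connected orientable surface with ONE boundary
    component: chi = 2 - 2g - 1 *)
Definition genus1 (nv : nat) (tris : list (nat * nat * nat)) : Z :=
  ((1 - euler_char nv tris) / 2)%Z.

Definition seifert_surface (Q : list pt) (nv : nat) (vert : nat -> pt)
    (tris : list (nat * nat * nat)) : Prop :=
  is_tri_surface nv vert tris /\ oriented_surface tris /\
  connected_surface nv tris /\
  (forall x, surface_boundary vert tris x <-> polygon_set Q x).

Definition is_knot_genus (P : list pt) (g : Z) : Prop :=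
  (exists Q nv vert tris, knot_equiv P Q /\ seifert_surface Q nv vert tris /\
                          genus1 nv tris = g) /\
  (forall Q nv vert tris, knot_equiv P Q -> seifert_surface Q nv vert tris ->
                          (g <= genus1 nv tris)%Z).

(* A triangulated surface with [t] triangles, [E] edges and [b] boundary edges
   satisfies [2E = 3t + b]; moreover [b] is at most the number of vertices, because
   the link of a vertex is a connected graph of maximal degree two and so has at most
   two leaves.  Euler's formula then gives [4 g + 1 <= t] for the genus [g] of such a
   surface with one boundary curve.  The given surface need not be connected, but the
   component meeting [P] has all of [P] as boundary: [P] is connected and the boundaries
   of distinct components are disjoint closed sets.  This component is a Seifert surface
   of [P] with at most [t] triangles, and its genus bounds [g(K)] from above. *)

From Stdlib Require Import Reals List Arith ZArith Relations Lra Lia Bool.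
From Stdlib Require Import Classical ClassicalEpsilon.
Import ListNotations.

Open Scope nat_scope.

Lemma NoDup_incl_length_eq {A} (l1 l2 : list A) : NoDup l1 -> NoDup l2 ->
  incl l1 l2 -> incl l2 l1 -> length l1 = length l2.
Proof. intros. apply Nat.le_antisymm; apply NoDup_incl_length; auto. Qed.

Lemma NoDup_length_le2 {A} (l : list A) : NoDup l ->
  (forall x1 x2 x3, In x1 l -> In x2 l -> In x3 l ->
     x1 <> x2 -> x1 <> x3 -> x2 <> x3 -> False) ->
  length l <= 2.
Proof.
  intros Hnd H3. destruct l as [|x1 [|x2 [|x3 l]]]; simpl; try lia. exfalso.
  apply NoDup_cons_iff in Hnd as [n1 Hnd]. apply NoDup_cons_iff in Hnd as [n2 _].
  apply (H3 x1 x2 x3); simpl; auto; intros ->; simpl in *; tauto.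
Qed.

Lemma filter_length_1_eq {A} (f : A -> bool) l x y : length (filter f l) = 1 ->
  In x l -> f x = true -> In y l -> f y = true -> x = y.
Proof.
  intros Hl Hx Hfx Hy Hfy.
  assert (Ix : In x (filter f l)) by (apply filter_In; auto).
  assert (Iy : In y (filter f l)) by (apply filter_In; auto).
  destruct (filter f l) as [|u [|w r]]; simpl in *; try lia.
  destruct Ix as [<-|[]], Iy as [<-|[]]; auto.
Qed.

Lemma list_sum_map_add {A} (f g : A -> nat) l :
  list_sum (map (fun a => f a + g a) l) = list_sum (map f l) + list_sum (map g l).
Proof. induction l; simpl; lia. Qed.

Lemma length_filter_list_sum {A} (f : A -> bool) l :
  length (filter f l) = list_sum (map (fun a => if f a then 1 else 0) l).
Proof. induction l as [|a l IH]; simpl; auto. destruct (f a); simpl; lia. Qed.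

Lemma list_sum_double_count {A B} (f : A -> B -> bool) l1 l2 :
  list_sum (map (fun a => length (filter (f a) l2)) l1) =
  list_sum (map (fun b => length (filter (fun a => f a b) l1)) l2).
Proof.
  induction l1 as [|a l1 IH]; simpl.
  - induction l2; simpl; auto.
  - rewrite IH, length_filter_list_sum, <- list_sum_map_add. f_equal.
    apply map_ext. intros b. destruct (f a b); reflexivity.
Qed.

Lemma list_sum_le_const {A} (f : A -> nat) l k : (forall a, In a l -> f a <= k) ->
  list_sum (map f l) <= k * length l.
Proof.
  induction l as [|x l IH]; simpl; intros H; [lia|].
  specialize (IH (fun a H' => H a (or_intror H'))). specialize (H x (or_introl eq_refl)). lia.
Qed.

Lemma list_sum_const {A} (f : A -> nat) l k : (forall a, In a l -> f a = k) ->
  list_sum (map f l) = k * length l.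
Proof.
  induction l as [|x l IH]; simpl; intros H; [lia|].
  rewrite IH, H by auto. lia.
Qed.

Lemma list_sum_one_two {A} (c : A -> nat) l : (forall e, In e l -> 1 <= c e <= 2) ->
  list_sum (map c l) + length (filter (fun e => c e =? 1) l) = 2 * length l.
Proof.
  induction l as [|e l IH]; simpl; intros H; auto.
  specialize (IH (fun e' H' => H e' (or_intror H'))). specialize (H e (or_introl eq_refl)).
  destruct (Nat.eqb_spec (c e) 1); simpl; lia.
Qed.

Definition pairwise_nth {A} (R : A -> A -> Prop) (d : A) (l : list A) : Prop :=
  forall i j, i < length l -> j < length l -> i <> j -> R (nth i l d) (nth j l d).

Lemma pairwise_nth_ForallOrdPairs {A} (R : A -> A -> Prop) d l :
  pairwise_nth R d l -> ForallOrdPairs R l.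
Proof.
  induction l as [|a l IH]; intros H; constructor.
  - apply Forall_forall. intros x Hx. apply (In_nth _ _ d) in Hx as [j [Hj <-]].
    apply (H 0 (S j)); simpl; lia.
  - apply IH. intros i j Hi Hj Hij. apply (H (S i) (S j)); simpl; lia.
Qed.

Lemma ForallOrdPairs_pairwise_nth {A} (R : A -> A -> Prop) d l :
  (forall x y, R x y -> R y x) -> ForallOrdPairs R l -> pairwise_nth R d l.
Proof.
  intros Hs H. induction H as [|a l Hf H IH]; intros i j Hi Hj Hij; simpl in *; [lia|].
  rewrite Forall_forall in Hf.
  destruct i as [|i], j as [|j]; try lia.
  - apply Hf, nth_In; lia.
  - apply Hs, Hf, nth_In; lia.
  - apply IH; lia.
Qed.

Lemma ForallOrdPairs_filter {A} (R : A -> A -> Prop) f l :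
  ForallOrdPairs R l -> ForallOrdPairs R (filter f l).
Proof.
  intros H. induction H as [|a l Hf H IH]; simpl; [constructor|].
  destruct (f a); auto. constructor; auto.
  rewrite Forall_forall in *. intros x Hx. apply filter_In in Hx. apply Hf; tauto.
Qed.

Lemma ForallOrdPairs_map {A B} (R : A -> A -> Prop) (R' : B -> B -> Prop) (h : A -> B) l :
  ForallOrdPairs R l -> (forall x y, In x l -> In y l -> R x y -> R' (h x) (h y)) ->
  ForallOrdPairs R' (map h l).
Proof.
  intros H. induction H as [|a l Hf H IH]; simpl; intros Hi; constructor.
  - rewrite Forall_forall in *. intros x Hx. apply in_map_iff in Hx as [y [<- Hy]].
    apply Hi; simpl; auto.
  - apply IH. intros; apply Hi; simpl; auto.
Qed.

Lemma filter_filter_absorb {A} (f g : A -> bool) l :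
  (forall x, In x l -> f x = true -> g x = true) -> filter f (filter g l) = filter f l.
Proof.
  induction l as [|a l IH]; simpl; intros H; auto.
  destruct (g a) eqn:Eg; simpl.
  - destruct (f a); rewrite IH; auto.
  - destruct (f a) eqn:Ef; [rewrite H in Eg; auto; discriminate|apply IH; auto].
Qed.

Lemma length_filter_filter_le {A} (f g : A -> bool) l :
  length (filter f (filter g l)) <= length (filter f l).
Proof.
  induction l as [|a l IH]; simpl; auto.
  destruct (g a); simpl; destruct (f a); simpl; lia.
Qed.

Lemma map_fst_filter {A B} (g : A -> bool) (l : list (A * B)) :
  map fst (filter (fun p => g (fst p)) l) = filter g (map fst l).
Proof. induction l as [|[a b] l IH]; simpl; auto. destruct (g a); simpl; rewrite IH; auto. Qed.

Lemma map_fst_combine {A B} (l : list A) (l' : list B) : length l = length l' ->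
  map fst (combine l l') = l.
Proof.
  revert l'. induction l as [|a l IH]; intros [|b l'] H; simpl in *; try lia; auto.
  rewrite IH; auto.
Qed.

Lemma clos_rt_map {A B} (R : A -> A -> Prop) (R' : B -> B -> Prop) (h : A -> B)
  (Inv : A -> Prop) : (forall a b, Inv a -> R a b -> Inv b /\ R' (h a) (h b)) ->
  forall x y, clos_refl_trans _ R x y -> Inv x -> clos_refl_trans _ R' (h x) (h y).
Proof.
  intros H x y Hr. apply clos_rt_rt1n in Hr. induction Hr as [|x y z Hxy _ IH]; intros Hx.
  - apply rt_refl.
  - destruct (H _ _ Hx Hxy). eapply rt_trans; [apply rt_step|]; eauto.
Qed.

Lemma clos_rt_sym {A} (R : A -> A -> Prop) : (forall a b, R a b -> R b a) ->
  forall x y, clos_refl_trans _ R x y -> clos_refl_trans _ R y x.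
Proof.
  intros Hs x y H. induction H; [apply rt_step; auto|apply rt_refl|eapply rt_trans; eauto].
Qed.

Open Scope R_scope.

(** * Segments and triangles *)

Lemma pt_ext (p q : pt) : px p = px q -> py p = py q -> pz p = pz q -> p = q.
Proof. destruct p, q; simpl; intros; subst; reflexivity. Qed.

Definition linept (p q : pt) (s : R) : pt :=
  mkpt (px p + s * (px q - px p)) (py p + s * (py q - py p)) (pz p + s * (pz q - pz p)).

Lemma linept0 p q : linept p q 0 = p.
Proof. apply pt_ext; unfold linept; simpl; ring. Qed.

Lemma linept1 p q : linept p q 1 = q.
Proof. apply pt_ext; unfold linept; simpl; ring. Qed.

Lemma in_seg_iff a b x : in_seg a b x <-> exists l, 0 <= l <= 1 /\ x = linept a b l.
Proof.
  unfold in_seg, in_hull; split.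
  - intros [w [Hl [Hf [Hs ->]]]].
    destruct w as [|w1 [|w2 [|w3 w]]]; simpl in Hl; try discriminate.
    apply Forall_inv in Hf as Hw1. apply Forall_inv_tail, Forall_inv in Hf as Hw2.
    simpl in Hs. exists w2. split; [lra|].
    apply pt_ext; unfold lincomb, linept; simpl; replace w1 with (1 - w2) by lra; ring.
  - intros [l [Hl ->]]. exists [1 - l; l]. repeat split.
    + repeat (apply Forall_cons; [lra|]); apply Forall_nil.
    + simpl; lra.
    + apply pt_ext; unfold lincomb, linept; simpl; ring.
Qed.

Lemma linept_in_seg p q s : 0 <= s <= 1 -> in_seg p q (linept p q s).
Proof. intros Hs. apply in_seg_iff. exists s; auto. Qed.

Lemma in_hull_nil x : ~ in_hull [] x.
Proof. intros [[|r w] [Hl [_ [Hs _]]]]; simpl in *; [lra|discriminate]. Qed.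

Definition in_triangle (a b c x : pt) : Prop := exists wa wb wc,
  0 <= wa /\ 0 <= wb /\ 0 <= wc /\ wa + wb + wc = 1 /\
  x = mkpt (wa * px a + wb * px b + wc * px c) (wa * py a + wb * py b + wc * py c)
           (wa * pz a + wb * pz b + wc * pz c).

Lemma in_hull3_iff a b c x : in_hull [a; b; c] x <-> in_triangle a b c x.
Proof.
  unfold in_hull, in_triangle; split.
  - intros [w [Hl [Hf [Hs ->]]]].
    destruct w as [|wa [|wb [|wc [|w' w]]]]; simpl in Hl; try discriminate.
    apply Forall_inv in Hf as Ha. apply Forall_inv_tail in Hf.
    apply Forall_inv in Hf as Hb. apply Forall_inv_tail, Forall_inv in Hf as Hc.
    simpl in Hs. exists wa, wb, wc. repeat split; try lra.
    apply pt_ext; unfold lincomb; simpl; ring.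
  - intros [wa [wb [wc [Ha [Hb [Hc [Hs ->]]]]]]]. exists [wa; wb; wc]. repeat split.
    + repeat (apply Forall_cons; [lra|]); apply Forall_nil.
    + simpl; lra.
    + apply pt_ext; unfold lincomb; simpl; ring.
Qed.

Lemma in_triangle_linept a b c y z s : in_triangle a b c y -> in_triangle a b c z ->
  0 <= s <= 1 -> in_triangle a b c (linept y z s).
Proof.
  intros [ya [yb [yc [? [? [? [? ->]]]]]]] [za [zb [zc [? [? [? [? ->]]]]]]] Hs.
  exists ((1 - s) * ya + s * za), ((1 - s) * yb + s * zb), ((1 - s) * yc + s * zc).
  repeat split; try nra.
  apply pt_ext; unfold linept; simpl; ring.
Qed.

Lemma tri_has_In T v : tri_has T v = true <-> In v (tri_list T).
Proof.
  unfold tri_has. rewrite existsb_exists. split.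
  - intros [y [Hy He]]. apply Nat.eqb_eq in He. subst; auto.
  - intros H. exists v. split; auto. apply Nat.eqb_refl.
Qed.

Lemma tri_has3 a b c v : tri_has (a, b, c) v = true <-> v = a \/ v = b \/ v = c.
Proof. rewrite tri_has_In. simpl. intuition. Qed.

Lemma in_triangle_vertex vert a b c v : tri_has (a, b, c) v = true ->
  in_triangle (vert a) (vert b) (vert c) (vert v).
Proof.
  rewrite tri_has3. intros [->|[->| ->]];
    [exists 1, 0, 0 | exists 0, 1, 0 | exists 0, 0, 1];
    repeat split; try lra; apply pt_ext; simpl; ring.
Qed.

Lemma in_seg_in_hull_tri vert T u v x : tri_has T u = true -> tri_has T v = true ->
  in_seg (vert u) (vert v) x -> in_hull (map vert (tri_list T)) x.
Proof.
  destruct T as [[a b] c]. simpl. rewrite in_hull3_iff, in_seg_iff.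
  intros Hu Hv [l [Hl ->]]. apply in_triangle_linept; auto using in_triangle_vertex.
Qed.

(** * Closed subsets of the real line *)

Definition closedR (X : R -> Prop) : Prop := forall x, ~ X x ->
  exists e, 0 < e /\ forall y, Rabs (y - x) < e -> ~ X y.

Lemma closedR_ext X Y : (forall s, X s <-> Y s) -> closedR X -> closedR Y.
Proof.
  intros H HX x Hx. destruct (HX x) as [e [He Hy]].
  - rewrite H; auto.
  - exists e; split; auto. intros y Hyx. rewrite <- H. auto.
Qed.

Lemma closedR_false : closedR (fun _ => False).
Proof. intros x _. exists 1. split; [lra|]. tauto. Qed.

Lemma closedR_and X Y : closedR X -> closedR Y -> closedR (fun s => X s /\ Y s).
Proof.
  intros HX HY x Hx. destruct (classic (X x)) as [H|H].
  - destruct (HY x) as [e [He Hy]]; [tauto|]. exists e; split; auto.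
    intros y Hyx [_ ?]. eapply Hy; eauto.
  - destruct (HX x) as [e [He Hy]]; [tauto|]. exists e; split; auto.
    intros y Hyx [? _]. eapply Hy; eauto.
Qed.

Lemma closedR_or X Y : closedR X -> closedR Y -> closedR (fun s => X s \/ Y s).
Proof.
  intros HX HY x Hx.
  destruct (HX x) as [e1 [He1 Hy1]]; [tauto|].
  destruct (HY x) as [e2 [He2 Hy2]]; [tauto|].
  exists (Rmin e1 e2). split; [apply Rmin_pos; auto|].
  intros y Hyx [H|H].
  - eapply Hy1; eauto. pose proof (Rmin_l e1 e2); lra.
  - eapply Hy2; eauto. pose proof (Rmin_r e1 e2); lra.
Qed.

Lemma closedR_Exists {A} (Q : A -> R -> Prop) (l : list A) :
  (forall a, In a l -> closedR (Q a)) -> closedR (fun s => Exists (fun a => Q a s) l).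
Proof.
  induction l as [|a l IH]; intros H.
  - apply (closedR_ext (fun _ => False)); [|apply closedR_false].
    intros s; split; [tauto|]. intros Hs; inversion Hs.
  - apply (closedR_ext (fun s => Q a s \/ Exists (fun a => Q a s) l)).
    + intros s. rewrite Exists_cons. tauto.
    + apply closedR_or; [apply H; simpl; auto|apply IH; intros; apply H; simpl; auto].
Qed.

Definition affine (f : R -> R) : Prop := exists a b, forall s, f s = a * s + b.

Lemma closedR_affine_le f c : affine f -> closedR (fun s => f s <= c).
Proof.
  intros [a [b Hf]] x Hx. rewrite Hf in Hx. apply Rnot_le_lt in Hx.
  assert (Hpos : 0 < Rabs a + 1) by (pose proof (Rabs_pos a); lra).
  exists ((a * x + b - c) / (Rabs a + 1)). split; [apply Rdiv_lt_0_compat; lra|].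
  intros y Hy Hc. rewrite Hf in Hc.
  apply (Rmult_lt_compat_r (Rabs a + 1)) in Hy; auto.
  unfold Rdiv in Hy. rewrite Rmult_assoc, Rinv_l in Hy by lra.
  assert (Rabs (a * (y - x)) <= Rabs (y - x) * (Rabs a + 1)).
  { rewrite Rabs_mult. pose proof (Rabs_pos (y - x)). nra. }
  pose proof (Rle_abs (- (a * (y - x)))). rewrite Rabs_Ropp in *. nra.
Qed.

Lemma closedR_affine_ge f c : affine f -> closedR (fun s => c <= f s).
Proof.
  intros [a [b Hf]].
  apply (closedR_ext (fun s => - f s <= - c)); [intros; lra|].
  apply closedR_affine_le. exists (- a), (- b). intros s. rewrite Hf. ring.
Qed.

Lemma closedR_affine_eq f c : affine f -> closedR (fun s => f s = c).
Proof.
  intros Hf. apply (closedR_ext (fun s => f s <= c /\ c <= f s)); [intros; lra|].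
  apply closedR_and; auto using closedR_affine_le, closedR_affine_ge.
Qed.

Lemma closedR_left_limit (A : R -> Prop) m : closedR A -> 0 < m ->
  (forall y, 0 <= y < m -> A y) -> A m.
Proof.
  intros HA Hm Hbelow. apply NNPP. intros HnA.
  destruct (HA m HnA) as [e [He Hy]].
  apply (Hy (Rmax 0 (m - e / 2))).
  - unfold Rmax; destruct (Rle_dec 0 (m - e / 2)); apply Rabs_def1; lra.
  - apply Hbelow. unfold Rmax; destruct (Rle_dec 0 (m - e / 2)); lra.
Qed.

(* The supremum [m] of the initial segments of [0, 1] contained in [A] is in [A]
   by closedness; if [m < 1], closedness of [B] pushes such a segment beyond [m]. *)
Lemma unit_interval_connected (A B : R -> Prop) : closedR A -> closedR B ->
  (forall s, 0 <= s <= 1 -> A s \/ B s) ->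
  (forall s, 0 <= s <= 1 -> A s -> B s -> False) ->
  A 0 -> forall s, 0 <= s <= 1 -> A s.
Proof.
  intros HA HB Hcov Hdis H0.
  set (S := fun s => 0 <= s <= 1 /\ forall y, 0 <= y <= s -> A y).
  assert (HS0 : S 0) by (split; [lra|intros y Hy; replace y with 0 by lra; auto]).
  destruct (completeness S) as [m [Hub Hlub]].
  { exists 1. intros s [Hs _]. lra. }
  { exists 0. auto. }
  assert (Hm0 : 0 <= m) by (apply Hub; auto).
  assert (Hm1 : m <= 1) by (apply Hlub; intros s [Hs _]; lra).
  assert (Hbelow : forall y, 0 <= y < m -> A y).
  { intros y Hy. destruct (classic (exists s, S s /\ y <= s)) as [[s [[_ Hs] Hys]]|Hn].
    - apply Hs; lra.
    - exfalso. assert (m <= y); [|lra]. apply Hlub. intros s Hs.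
      destruct (Rle_lt_dec s y); auto. exfalso; apply Hn; exists s; split; auto; lra. }
  assert (Hupto : forall y, 0 <= y <= m -> A y).
  { intros y Hy. destruct (Req_dec y m) as [->|]; [|apply Hbelow; lra].
    destruct (Req_dec m 0) as [->|]; [auto|]. apply closedR_left_limit; auto; lra. }
  destruct (Req_dec m 1) as [->|Hm]; [intros s Hs; apply Hupto; lra|exfalso].
  destruct (HB m) as [e [He HnB]]; [intros HBm; apply (Hdis m); auto; lra|].
  set (m' := Rmin 1 (m + e / 2)).
  assert (Hm' : m < m' <= 1) by (unfold m', Rmin; destruct (Rle_dec 1 (m + e / 2)); lra).
  enough (S m') by (pose proof (Hub m' H); lra).
  split; [lra|]. intros y Hy. destruct (Rle_dec y m); [apply Hupto; lra|].
  destruct (Hcov y) as [?|HBy]; [lra|auto|].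
  exfalso. apply (HnB y); auto. apply Rabs_def1; unfold m', Rmin in *;
    destruct (Rle_dec 1 (m + e / 2)); lra.
Qed.

Definition dot (u v : pt) : R := px u * px v + py u * py v + pz u * pz v.

(* Parameter of the orthogonal projection of [x] on the line [ab]. *)
Definition seg_param (a b x : pt) : R := dot (psub x a) (psub b a) / dot (psub b a) (psub b a).

Lemma dot_self_neq0 a b : a <> b -> dot (psub b a) (psub b a) <> 0.
Proof.
  intros Hab Hn. apply Hab. unfold dot, psub, padd, pscale in Hn; simpl in Hn.
  set (u := px b + -1 * px a) in Hn. set (v := py b + -1 * py a) in Hn.
  set (w := pz b + -1 * pz a) in Hn.
  assert (u = 0) by nra. assert (v = 0) by nra. assert (w = 0) by nra.
  apply pt_ext; unfold u, v, w in *; lra.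
Qed.

Lemma in_seg_seg_param a b x : a <> b ->
  in_seg a b x <-> 0 <= seg_param a b x <= 1 /\ x = linept a b (seg_param a b x).
Proof.
  intros Hab. pose proof (dot_self_neq0 a b Hab) as Hn. rewrite in_seg_iff. split.
  - intros [l [Hl ->]].
    assert (E : seg_param a b (linept a b l) = l).
    { unfold seg_param. apply (Rmult_eq_reg_r (dot (psub b a) (psub b a))); auto.
      unfold Rdiv. rewrite Rmult_assoc, Rinv_l by auto.
      unfold dot, psub, padd, pscale, linept; simpl; ring. }
    rewrite E. auto.
  - intros [Hl Hx]. eauto.
Qed.

Lemma affine_seg_param_linept a b p q : affine (fun s => seg_param a b (linept p q s)).
Proof.
  set (n := dot (psub b a) (psub b a)).
  exists (dot (psub q p) (psub b a) / n), (dot (psub p a) (psub b a) / n). intros s.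
  unfold seg_param, Rdiv. fold n.
  unfold dot, psub, padd, pscale, linept; simpl; ring.
Qed.

Lemma affine_coord_linept_diff (c : pt -> R) a b p q f :
  (forall u v s, c (linept u v s) = c u + s * (c v - c u)) -> affine f ->
  affine (fun s => c (linept p q s) - c (linept a b (f s))).
Proof.
  intros Hc [al [be Hf]].
  exists (c q - c p - al * (c b - c a)), (c p - c a - be * (c b - c a)). intros s.
  rewrite !Hc, Hf. ring.
Qed.

Lemma closedR_in_seg_linept a b p q : a <> b ->
  closedR (fun s => in_seg a b (linept p q s)).
Proof.
  intros Hab. set (f := fun s => seg_param a b (linept p q s)).
  assert (Hf : affine f) by apply affine_seg_param_linept.
  set (d := fun c s => c (linept p q s) - c (linept a b (f s))).
  assert (Hd : forall c, (forall u v s, c (linept u v s) = c u + s * (c v - c u)) ->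
            closedR (fun s => d c s = 0)).
  { intros c Hc. apply closedR_affine_eq, affine_coord_linept_diff; auto. }
  apply (closedR_ext (fun s => (0 <= f s /\ f s <= 1) /\
     (d px s = 0 /\ d py s = 0 /\ d pz s = 0))).
  - intros s. rewrite in_seg_seg_param by auto. unfold d, f. split.
    + intros [Hl [Hx [Hy Hz]]]. split; [lra|]. apply pt_ext; lra.
    + intros [Hl Hx]. rewrite <- Hx. split; [lra|]. repeat split; ring.
  - repeat apply closedR_and; try (apply Hd; reflexivity);
      auto using closedR_affine_le, closedR_affine_ge.
Qed.

Open Scope nat_scope.

(** * Graphs of maximal degree two *)

Section MaxDegreeTwo.
Variable G : nat -> nat -> Prop.
Hypothesis G_sym : forall x y, G x y -> G y x.
Hypothesis G_deg2 : forall x y1 y2 y3, G x y1 -> G x y2 -> G x y3 ->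
  y1 = y2 \/ y1 = y3 \/ y2 = y3.

Definition leaf (x : nat) : Prop := forall y z, G x y -> G x z -> y = z.

Fixpoint walk (x : nat) (l : list nat) (y : nat) : Prop :=
  match l with [] => x = y | z :: l' => G x z /\ walk z l' y end.

Lemma rt_walk x y : clos_refl_trans _ G x y -> exists l, walk x l y.
Proof.
  intros H. apply clos_rt_rt1n in H. induction H as [|x y z Hxy _ [l Hl]].
  - exists []. reflexivity.
  - exists (y :: l). simpl; auto.
Qed.

Lemma walk_suffix l1 w l2 x y : walk x (l1 ++ w :: l2) y -> walk w l2 y.
Proof.
  revert x. induction l1 as [|a l1 IH]; simpl; intros x H; [tauto|].
  destruct H as [_ H]. eapply IH; eauto.
Qed.

Lemma walk_shorten x l y : walk x l y -> exists l', walk x l' y /\ NoDup (x :: l').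
Proof.
  revert x. induction l as [|z l IH]; intros x H.
  - exists []. split; auto. repeat constructor. simpl; tauto.
  - destruct H as [Hxz H]. destruct (IH z H) as [l' [Hc Hnd]].
    destruct (Nat.eq_dec x z) as [->|Hne]; [exists l'; auto|].
    destruct (in_dec Nat.eq_dec x l') as [Hin|Hnin].
    + apply in_split in Hin as [l1 [l2 ->]]. exists l2. split; [eapply walk_suffix; eauto|].
      apply NoDup_cons_iff in Hnd as [_ Hnd]. eapply NoDup_app_remove_l; eauto.
    + exists (z :: l'). split; [simpl; auto|]. constructor; auto. simpl. intros [?|?]; auto.
Qed.

Lemma walk_nth x l y : walk x l y -> forall i, i < length l ->
  G (nth i (x :: l) 0) (nth (S i) (x :: l) 0).
Proof.
  revert x. induction l as [|z l IH]; intros x H i Hi; simpl in *; [lia|].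
  destruct H as [Hxz H]. destruct i as [|i]; auto. apply (IH z H i). lia.
Qed.

Lemma walk_nth_pred x l y : walk x l y -> forall i, 0 < i <= length l ->
  G (nth i (x :: l) 0) (nth (i - 1) (x :: l) 0).
Proof.
  intros Hw i Hi. apply G_sym. pose proof (walk_nth _ _ _ Hw (i - 1) ltac:(lia)) as Hg.
  replace (S (i - 1)) with i in Hg by lia. exact Hg.
Qed.

Lemma walk_last x l y : walk x l y -> nth (length l) (x :: l) 0 = y.
Proof.
  revert x. induction l as [|z l IH]; intros x H; simpl in *; auto.
  destruct H as [_ H]. apply (IH z H).
Qed.

Lemma walk_between_leaves_closed x1 x2 l : leaf x1 -> leaf x2 ->
  walk x1 l x2 -> NoDup (x1 :: l) -> l <> [] ->
  forall y z, In y (x1 :: l) -> G y z -> In z (x1 :: l).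
Proof.
  intros D1 D2 Hw Hnd Hne. set (p := x1 :: l).
  assert (Hlen : 1 <= length l) by (destruct l; simpl; [congruence|lia]).
  assert (Hlast : nth (length l) p 0 = x2) by (eapply walk_last; eauto).
  assert (Hfwd : forall i, i < length l -> G (nth i p 0) (nth (S i) p 0))
    by (intros i Hi; apply (walk_nth _ _ _ Hw i Hi)).
  assert (Hback : forall i, 0 < i <= length l -> G (nth i p 0) (nth (i - 1) p 0))
    by (apply (walk_nth_pred _ _ _ Hw)).
  assert (Hon : forall i, i <= length l -> In (nth i p 0) p)
    by (intros i Hi; apply nth_In; simpl; lia).
  intros y z Hy Hz. apply (In_nth _ _ 0) in Hy as [i [Hi <-]]. simpl in Hi.
  destruct (Nat.eq_dec i 0) as [->|Hi0].
  - rewrite (D1 z (nth 1 p 0)); [apply Hon; lia|exact Hz|apply (Hfwd 0); lia].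
  - destruct (Nat.eq_dec i (length l)) as [->|Hil].
    + rewrite Hlast in Hz. rewrite (D2 z (nth (length l - 1) p 0)); [apply Hon; lia|auto|].
      rewrite <- Hlast. apply Hback. lia.
    + assert (Hprev := Hback i ltac:(lia)). assert (Hnext := Hfwd i ltac:(lia)).
      destruct (G_deg2 _ _ _ _ Hz Hprev Hnext) as [->|[->|E]]; try (apply Hon; lia).
      apply (NoDup_nth p 0) in E; auto; simpl; lia.
Qed.

(* A simple walk between two leaves is closed under adjacency, so it passes
   through [x3], which would then have two distinct neighbours. *)
Lemma no_three_connected_leaves x1 x2 x3 :
  x1 <> x2 -> x1 <> x3 -> x2 <> x3 -> leaf x1 -> leaf x2 -> leaf x3 ->
  clos_refl_trans _ G x1 x2 -> clos_refl_trans _ G x1 x3 -> False.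
Proof.
  intros n12 n13 n23 D1 D2 D3 R12 R13.
  destruct (rt_walk _ _ R12) as [l0 Hl0].
  destruct (walk_shorten _ _ _ Hl0) as [l [Hw Hnd]]. clear l0 Hl0.
  assert (Hne : l <> []) by (intros ->; simpl in Hw; congruence).
  set (p := x1 :: l).
  assert (Hin3 : In x3 p).
  { assert (Hclosed : forall a b, clos_refl_trans_1n _ G a b -> In a p -> In b p).
    { intros a b Hab. induction Hab as [|a b c Hab _ IH]; auto.
      intros Ha. apply IH. apply (walk_between_leaves_closed x1 x2 l D1 D2 Hw Hnd Hne a b Ha Hab). }
    apply (Hclosed x1); [apply clos_rt_rt1n; auto|simpl; auto]. }
  apply (In_nth _ _ 0) in Hin3 as [i [Hi E3]]. simpl in Hi.
  assert (Hlast : nth (length l) p 0 = x2) by (eapply walk_last; eauto).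
  assert (Hi0 : i <> 0) by (intros ->; simpl in E3; congruence).
  assert (Hil : i <> length l) by (intros ->; congruence).
  assert (Hprev : G x3 (nth (i - 1) p 0)) by (rewrite <- E3; apply (walk_nth_pred _ _ _ Hw); lia).
  assert (Hnext : G x3 (nth (S i) p 0)) by (rewrite <- E3; apply (walk_nth _ _ _ Hw); lia).
  specialize (D3 _ _ Hprev Hnext). apply (NoDup_nth p 0) in D3; auto; simpl; lia.
Qed.

End MaxDegreeTwo.

(** * Counting on a triangulated surface *)

Lemma noncollinear_distinct p q r : noncollinear p q r -> p <> q /\ q <> r /\ p <> r.
Proof.
  unfold noncollinear. intros H. repeat split; intros E; subst; apply H;
  apply pt_ext; unfold cross, psub, padd, pscale, origin; simpl; ring.
Qed.

Lemma tri_has3_cover a b c v x y : v <> x -> v <> y -> x <> y ->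
  tri_has (a, b, c) v = true -> tri_has (a, b, c) x = true -> tri_has (a, b, c) y = true ->
  forall u, tri_has (a, b, c) u = true -> u = v \/ u = x \/ u = y.
Proof.
  intros n1 n2 n3 Hv Hx Hy u Hu. rewrite tri_has3 in Hv, Hx, Hy, Hu.
  destruct Hv as [?|[?|?]], Hx as [?|[?|?]], Hy as [?|[?|?]],
    Hu as [?|[?|?]]; subst; try congruence; tauto.
Qed.

Lemma edge_count_sym tris a b : edge_count tris a b = edge_count tris b a.
Proof. unfold edge_count. f_equal. apply filter_ext. intros; apply andb_comm. Qed.

Lemma edge_count_pos_iff tris a b : 0 < edge_count tris a b <->
  exists T, In T tris /\ tri_has T a = true /\ tri_has T b = true.
Proof.
  unfold edge_count. split.
  - intros H. destruct (filter _ tris) as [|T r] eqn:E; simpl in H; [lia|].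
    assert (HT : In T (filter (fun T => tri_has T a && tri_has T b) tris))
      by (rewrite E; simpl; auto).
    apply filter_In in HT as [HT Hab]. apply andb_true_iff in Hab. exists T; tauto.
  - intros [T [HT [Ha Hb]]].
    assert (In T (filter (fun T => tri_has T a && tri_has T b) tris))
      by (apply filter_In; rewrite Ha, Hb; auto).
    destruct (filter _ _); simpl in *; [tauto|lia].
Qed.

Section Surface.
Variables (nv : nat) (vert : nat -> pt) (tris : list (nat * nat * nat)).
Hypothesis HS : is_tri_surface nv vert tris.

Lemma surface_tri_wf a b c : In (a, b, c) tris ->
  a < nv /\ b < nv /\ c < nv /\ a <> b /\ b <> c /\ a <> c.
Proof.
  intros H. destruct HS as [HW _]. destruct (HW a b c H) as [? [? [? Hn]]].
  apply noncollinear_distinct in Hn as [? [? ?]].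
  repeat split; auto; intros ->; auto.
Qed.

Lemma surface_vertex_lt T v : In T tris -> tri_has T v = true -> v < nv.
Proof.
  destruct T as [[a b] c]. intros HT Hv. apply surface_tri_wf in HT.
  rewrite tri_has3 in Hv. lia.
Qed.

Lemma link_adj_sym v x y : link_adj tris v x y -> link_adj tris v y x.
Proof. intros [T [? [? [? [? [? [? ?]]]]]]]. exists T; repeat split; auto. Qed.

(* Three link neighbours [y1 y2 y3] of [x] would give three triangles on the edge [vx]. *)
Lemma link_adj_deg2 v x y1 y2 y3 :
  link_adj tris v x y1 -> link_adj tris v x y2 -> link_adj tris v x y3 ->
  y1 = y2 \/ y1 = y3 \/ y2 = y3.
Proof.
  intros [T1 [I1 [V1 [X1 [Y1 [nx1 [ny1 nxy1]]]]]]]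
    [T2 [I2 [V2 [X2 [Y2 [nx2 [ny2 nxy2]]]]]]] [T3 [I3 [V3 [X3 [Y3 [nx3 [ny3 nxy3]]]]]]].
  destruct (Nat.eq_dec y1 y2); auto. destruct (Nat.eq_dec y1 y3); auto.
  destruct (Nat.eq_dec y2 y3); auto. exfalso.
  assert (Hcov : forall T y, tri_has T v = true -> tri_has T x = true -> tri_has T y = true ->
     y <> v -> x <> y -> forall u, tri_has T u = true -> u = v \/ u = x \/ u = y).
  { intros [[a b] c] y Hv Hx Hy nyv nxy u Hu. apply (tri_has3_cover a b c v x y); auto. }
  assert (T1 <> T2).
  { intros ->. destruct (Hcov T2 y1 V2 X2 Y1 ny1 nxy1 y2 Y2) as [?|[?|?]]; auto. }
  assert (T1 <> T3).
  { intros ->. destruct (Hcov T3 y1 V3 X3 Y1 ny1 nxy1 y3 Y3) as [?|[?|?]]; auto. }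
  assert (T2 <> T3).
  { intros ->. destruct (Hcov T3 y2 V3 X3 Y2 ny2 nxy2 y3 Y3) as [?|[?|?]]; auto. }
  assert (Hle : 3 <= edge_count tris v x).
  { unfold edge_count. change 3 with (length [T1; T2; T3]). apply NoDup_incl_length.
    - repeat constructor; simpl; intuition.
    - intros T HT. apply filter_In.
      simpl in HT; destruct HT as [<-|[<-|[<-|[]]]]; rewrite ?V1, ?X1, ?V2, ?X2, ?V3, ?X3; auto. }
  destruct HS as [_ [_ [_ [_ [_ [HE _]]]]]]. specialize (HE v x ltac:(auto)). lia.
Qed.

Lemma link_leaf_of_boundary v x : edge_count tris v x = 1 -> leaf (link_adj tris v) x.
Proof.
  intros Hc y z [T1 [I1 [V1 [X1 [Y1 [nx1 [ny1 nxy1]]]]]]]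
    [T2 [I2 [V2 [X2 [Y2 [nx2 [ny2 nxy2]]]]]]].
  assert (T1 = T2).
  { apply (filter_length_1_eq (fun T => tri_has T v && tri_has T x) tris); auto;
      apply andb_true_iff; auto. }
  subst T2. destruct T1 as [[a b] c].
  destruct (tri_has3_cover a b c v x y) with (u := z) as [?|[?|?]]; auto; congruence.
Qed.

(* The link of [v] is connected of maximal degree 2, and each boundary edge [v xi]
   makes [xi] a leaf of it. *)
Lemma no_three_boundary_edges v x1 x2 x3 : v < nv ->
  x1 <> x2 -> x1 <> x3 -> x2 <> x3 -> v <> x1 -> v <> x2 -> v <> x3 ->
  edge_count tris v x1 = 1 -> edge_count tris v x2 = 1 -> edge_count tris v x3 = 1 -> False.
Proof.
  intros Hv n12 n13 n23 nv1 nv2 nv3 E1 E2 E3.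
  pose proof HS as [_ [_ [_ [_ [_ [_ HL]]]]]].
  apply (no_three_connected_leaves (link_adj tris v) (link_adj_sym v)
           (link_adj_deg2 v) x1 x2 x3); auto using link_leaf_of_boundary; apply HL; auto; lia.
Qed.

Definition edge_list : list (nat * nat) := nodup pair_eq_dec (flat_map unord_edges tris).
Definition edge_mult (e : nat * nat) : nat := edge_count tris (fst e) (snd e).
Definition boundary_edges : list (nat * nat) :=
  filter (fun e => edge_mult e =? 1) edge_list.

Lemma unord_edges_spec a b c e : a <> b -> b <> c -> a <> c -> In e (unord_edges (a, b, c)) ->
  fst e < snd e /\ tri_has (a, b, c) (fst e) = true /\ tri_has (a, b, c) (snd e) = true.
Proof.
  intros n1 n2 n3 H. rewrite !tri_has3.
  simpl in H; destruct H as [<-|[<-|[<-|[]]]]; simpl; lia.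
Qed.

Lemma edge_list_spec e : In e edge_list -> fst e < snd e /\ snd e < nv /\ 1 <= edge_mult e <= 2.
Proof.
  intros He. unfold edge_list in He. apply nodup_In, in_flat_map in He as [[[a b] c] [HT He]].
  destruct (surface_tri_wf a b c HT) as [? [? [? [? [? ?]]]]].
  destruct (unord_edges_spec a b c e) as [Hlt [Ha1 Ha2]]; auto.
  repeat split; auto.
  - rewrite tri_has3 in Ha2. lia.
  - enough (0 < edge_mult e) by lia. apply edge_count_pos_iff. exists (a, b, c); auto.
  - destruct HS as [_ [_ [_ [_ [_ [HE _]]]]]]. apply HE. lia.
Qed.

Lemma tri_edges_length T : In T tris ->
  length (filter (fun e => tri_has T (fst e) && tri_has T (snd e)) edge_list) = 3.
Proof.
  destruct T as [[a b] c]. intros HT.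
  destruct (surface_tri_wf a b c HT) as [? [? [? [? [? ?]]]]].
  change 3 with (length (unord_edges (a, b, c))).
  apply NoDup_incl_length_eq.
  - apply NoDup_filter, NoDup_nodup.
  - simpl. repeat constructor; simpl; intros Hc; repeat destruct Hc as [Hc|Hc];
      try injection Hc; try lia; auto.
  - intros [m M] Hin. apply filter_In in Hin as [Hin Hh].
    apply andb_true_iff in Hh as [Hm HM]. simpl in Hm, HM.
    destruct (edge_list_spec _ Hin) as [Hlt _]. simpl in Hlt.
    rewrite tri_has3 in Hm, HM. simpl.
    destruct Hm as [->|[->| ->]], HM as [->|[->| ->]]; try lia;
    first [left; apply pair_equal_spec; split; lia
          | right; left; apply pair_equal_spec; split; lia
          | right; right; left; apply pair_equal_spec; split; lia].
  - intros e He. apply filter_In. split.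
    + unfold edge_list. apply nodup_In, in_flat_map. exists (a, b, c); auto.
    + destruct (unord_edges_spec a b c e) as [_ [-> ->]]; auto.
Qed.

Lemma sum_edge_mult : list_sum (map edge_mult edge_list) = 3 * length tris.
Proof.
  unfold edge_mult, edge_count.
  rewrite (list_sum_double_count (fun e T => tri_has T (fst e) && tri_has T (snd e))).
  apply list_sum_const. apply tri_edges_length.
Qed.

Definition incident (v : nat) (e : nat * nat) : bool := (v =? fst e) || (v =? snd e).
Definition other_end (v : nat) (e : nat * nat) : nat := if v =? fst e then snd e else fst e.

Lemma incident_vertices m M : m < M -> M < nv ->
  length (filter (fun v => incident v (m, M)) (seq 0 nv)) = 2.
Proof.
  intros. change 2 with (length [m; M]). apply NoDup_incl_length_eq.
  - apply NoDup_filter, seq_NoDup.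
  - constructor; [simpl; intros [|[]]; lia|]. repeat constructor. simpl; tauto.
  - intros v Hv. apply filter_In in Hv as [_ Hv]. unfold incident in Hv. simpl in Hv.
    apply orb_true_iff in Hv as [Hv|Hv]; apply Nat.eqb_eq in Hv; subst; simpl; auto.
  - intros v Hv. apply filter_In. unfold incident; simpl.
    simpl in Hv; destruct Hv as [<-|[<-|[]]]; split; try (apply in_seq; lia);
      rewrite Nat.eqb_refl; auto using orb_true_r.
Qed.

Lemma other_end_spec v e : fst e < snd e -> incident v e = true ->
  other_end v e <> v /\ e = (Nat.min v (other_end v e), Nat.max v (other_end v e)) /\
  edge_mult e = edge_count tris v (other_end v e).
Proof.
  destruct e as [m M]; unfold incident, other_end, edge_mult; simpl. intros Hlt Hi.
  destruct (Nat.eqb_spec v m).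
  - subst. repeat split; try lia. f_equal; lia.
  - simpl in Hi. apply Nat.eqb_eq in Hi. subst. repeat split; try lia.
    + f_equal; lia.
    + apply edge_count_sym.
Qed.

Lemma boundary_edges_at_vertex v : v < nv ->
  length (filter (incident v) boundary_edges) <= 2.
Proof.
  intros Hv. apply NoDup_length_le2; [apply NoDup_filter, NoDup_filter, NoDup_nodup|].
  assert (Hp : forall e, In e (filter (incident v) boundary_edges) ->
     other_end v e <> v /\ e = (Nat.min v (other_end v e), Nat.max v (other_end v e)) /\
     edge_count tris v (other_end v e) = 1).
  { intros e He. apply filter_In in He as [He Hi]. apply filter_In in He as [He Hc].
    apply Nat.eqb_eq in Hc. destruct (edge_list_spec e He) as [Hlt _].
    destruct (other_end_spec v e Hlt Hi) as [? [? Hm]]. rewrite <- Hm. auto. }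
  intros e1 e2 e3 H1 H2 H3 n12 n13 n23.
  destruct (Hp e1 H1) as [o1 [q1 k1]], (Hp e2 H2) as [o2 [q2 k2]], (Hp e3 H3) as [o3 [q3 k3]].
  apply (no_three_boundary_edges v (other_end v e1) (other_end v e2) (other_end v e3) Hv);
    auto; intros E.
  - apply n12. rewrite q1, q2, E. auto.
  - apply n13. rewrite q1, q3, E. auto.
  - apply n23. rewrite q2, q3, E. auto.
Qed.

(* Double counting of the incidences between vertices and boundary edges. *)
Lemma boundary_edges_length : length boundary_edges <= nv.
Proof.
  pose proof (list_sum_double_count (fun e v => incident v e) boundary_edges (seq 0 nv)) as D.
  rewrite (list_sum_const _ _ 2) in D.
  2:{ intros [m M] He. apply filter_In in He as [He _].
      destruct (edge_list_spec _ He) as [? [? _]]. apply incident_vertices; auto. }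
  assert (list_sum (map (fun v => length (filter (fun e => incident v e) boundary_edges))
            (seq 0 nv)) <= 2 * length (seq 0 nv)).
  { apply list_sum_le_const. intros v Hv. apply in_seq in Hv.
    apply boundary_edges_at_vertex. lia. }
  rewrite length_seq in H. lia.
Qed.

(* With [E] edges, [b] boundary edges and [t] triangles, [2E = 3t + b] and [b <= nv],
   so [4 g + 1 <= 2 (1 - chi) + 1 = t + b + 3 - 2 nv <= t] as [nv >= 3]. *)
Theorem genus1_bound : tris <> [] -> (4 * genus1 nv tris + 1 <= Z.of_nat (length tris))%Z.
Proof.
  intros Hne.
  assert (Hnv : 3 <= nv).
  { assert (Hex : exists T, In T tris).
    { destruct tris as [|T r]; [congruence|exists T; simpl; auto]. }
    destruct Hex as [[[a b] c] HT].
    destruct (surface_tri_wf a b c HT) as [? [? [? [? [? ?]]]]]. lia. }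
  pose proof sum_edge_mult as S1.
  pose proof (list_sum_one_two edge_mult edge_list
    (fun e He => proj2 (proj2 (edge_list_spec e He)))) as S2.
  pose proof boundary_edges_length as S3. unfold boundary_edges in S3.
  unfold genus1, euler_char, num_edges. fold edge_list.
  set (E := length edge_list) in *. set (b := length (filter _ edge_list)) in *.
  set (t := length tris) in *.
  set (X := (1 - (Z.of_nat nv - Z.of_nat E + Z.of_nat t))%Z).
  pose proof (Z.div_mod X 2 ltac:(lia)). pose proof (Z.mod_pos_bound X 2 ltac:(lia)).
  lia.
Qed.

End Surface.

(** * Connected components *)

Definition tri_adj (tris : list (nat * nat * nat)) (x y : nat) : Prop :=
  exists T, In T tris /\ tri_has T x = true /\ tri_has T y = true.
Definition same_comp tris a0 u : Prop := clos_refl_trans _ (tri_adj tris) a0 u.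
Definition same_compb tris a0 u : bool :=
  if excluded_middle_informative (same_comp tris a0 u) then true else false.
(* Triangles are sorted into components by their first vertex. *)
Definition comp_tris tris a0 : list (nat * nat * nat) :=
  filter (fun T => same_compb tris a0 (fst (fst T))) tris.

Lemma same_compb_iff tris a0 u : same_compb tris a0 u = true <-> same_comp tris a0 u.
Proof.
  unfold same_compb. destruct (excluded_middle_informative _); split; auto; discriminate.
Qed.

Lemma same_comp_tri tris a0 T u w : same_comp tris a0 u -> In T tris -> tri_has T u = true ->
  tri_has T w = true -> same_comp tris a0 w.
Proof. intros Hc HT Hu Hw. eapply rt_trans; [exact Hc|]. apply rt_step. exists T; auto. Qed.

Lemma tri_has_fst (T : nat * nat * nat) : tri_has T (fst (fst T)) = true.
Proof. destruct T as [[a b] c]. apply tri_has3. simpl; auto. Qed.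

Lemma In_comp_tris tris a0 T :
  In T (comp_tris tris a0) <-> In T tris /\ same_comp tris a0 (fst (fst T)).
Proof. unfold comp_tris. rewrite filter_In, same_compb_iff. tauto. Qed.

Lemma comp_tris_vertex tris a0 T w : In T (comp_tris tris a0) -> tri_has T w = true ->
  same_comp tris a0 w.
Proof. rewrite In_comp_tris. intros [HT Hc] Hw. eapply same_comp_tri; eauto using tri_has_fst. Qed.

Lemma In_comp_tris_of_vertex tris a0 T u : In T tris -> tri_has T u = true ->
  same_comp tris a0 u -> In T (comp_tris tris a0).
Proof.
  intros HT Hu Hc. apply In_comp_tris. split; auto. eapply same_comp_tri; eauto using tri_has_fst.
Qed.

Lemma edge_count_comp_tris tris a0 a b : same_comp tris a0 a ->
  edge_count (comp_tris tris a0) a b = edge_count tris a b.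
Proof.
  intros Hc. unfold edge_count, comp_tris. rewrite filter_filter_absorb; auto.
  intros T HT Hf. apply andb_true_iff in Hf as [Ha _]. apply same_compb_iff.
  eapply same_comp_tri; eauto using tri_has_fst.
Qed.

Lemma edge_count_comp_tris_le tris a0 a b :
  edge_count (comp_tris tris a0) a b <= edge_count tris a b.
Proof. unfold edge_count, comp_tris. apply length_filter_filter_le. Qed.

Open Scope R_scope.

Definition boundary_from (vert : nat -> pt) tris (C : nat -> Prop) (x : pt) : Prop :=
  exists a b, C a /\ a <> b /\ edge_count tris a b = 1%nat /\ in_seg (vert a) (vert b) x.

Lemma closedR_boundary_from_linept nv vert tris C p q : is_tri_surface nv vert tris ->
  closedR (fun s => boundary_from vert tris C (linept p q s)).
Proof.
  intros HS.
  apply (closedR_ext (fun s => Exists (fun e => (C (fst e) /\ fst e <> snd e /\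
      edge_count tris (fst e) (snd e) = 1%nat) /\
      in_seg (vert (fst e)) (vert (snd e)) (linept p q s))
      (list_prod (seq 0 nv) (seq 0 nv)))).
  - intros s. rewrite Exists_exists. unfold boundary_from. split.
    + intros [[a b] [_ [[? [? ?]] ?]]]. exists a, b; auto.
    + intros [a [b [? [? [Hc ?]]]]]. exists (a, b).
      destruct (proj1 (edge_count_pos_iff tris a b) ltac:(lia)) as [T [HT [Ha Hb]]].
      split; [apply in_prod_iff; split; apply in_seq; split; try lia;
              eapply surface_vertex_lt; eauto|].
      simpl. auto.
  - apply closedR_Exists. intros [a b] Hab. simpl.
    destruct (classic (C a /\ a <> b /\ edge_count tris a b = 1%nat)) as [Hq|Hq].
    + apply (closedR_ext (fun s => in_seg (vert a) (vert b) (linept p q s))); [tauto|].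
      apply closedR_in_seg_linept. intros E. destruct HS as [_ [Hinj _]].
      apply in_prod_iff in Hab as [Ha Hb]. apply in_seq in Ha, Hb.
      apply Hinj in E; try lia; tauto.
    + apply (closedR_ext (fun _ => False)); [tauto|apply closedR_false].
Qed.

(* Boundary edges of different components lie in triangles without common
   vertex, which are disjoint by the embedding condition. *)
Lemma boundary_from_comp_disjoint nv vert tris a0 x : is_tri_surface nv vert tris ->
  boundary_from vert tris (same_comp tris a0) x ->
  boundary_from vert tris (fun a => ~ same_comp tris a0 a) x -> False.
Proof.
  intros HS [a1 [b1 [C1 [n1 [E1 S1]]]]] [a2 [b2 [C2 [n2 [E2 S2]]]]].
  destruct (proj1 (edge_count_pos_iff tris a1 b1) ltac:(lia)) as [T1 [I1 [A1 B1]]].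
  destruct (proj1 (edge_count_pos_iff tris a2 b2) ltac:(lia)) as [T2 [I2 [A2 B2]]].
  pose proof (in_seg_in_hull_tri vert T1 a1 b1 x A1 B1 S1) as H1.
  pose proof (in_seg_in_hull_tri vert T2 a2 b2 x A2 B2 S2) as H2.
  destruct HS as [_ [_ [_ [_ [Hemb _]]]]].
  pose proof (proj1 (Hemb T1 T2 I1 I2 x) (conj H1 H2)) as H12.
  destruct (common_verts T1 T2) as [|u r] eqn:Ec; [eapply in_hull_nil; eauto|].
  assert (Hu : In u (common_verts T1 T2)) by (rewrite Ec; simpl; auto).
  apply filter_In in Hu as [Hu1 Hu2]. apply tri_has_In in Hu1.
  apply C2. eapply same_comp_tri; [|exact I2|exact Hu2|exact A2].
  eapply same_comp_tri; [exact C1|exact I1|exact A1|exact Hu1].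
Qed.

Lemma pvert_mod P i :
  pvert P (i mod length P) = pvert P i /\ pvert P (S (i mod length P)) = pvert P (S i).
Proof.
  unfold pvert. split.
  - rewrite Nat.Div0.mod_mod. reflexivity.
  - f_equal. replace (S (i mod length P)) with (i mod length P + 1)%nat by lia.
    replace (S i) with (i + 1)%nat by lia. apply Nat.Div0.add_mod_idemp_l.
Qed.

(* Each edge of [P] is split into the closed parts lying on the boundary of the
   component of [a0] and on the boundary of the others; connectedness of the
   edge carries membership in the first one from vertex to vertex. *)
Lemma polygon_in_comp_boundary nv vert tris a0 P : is_tri_surface nv vert tris ->
  (forall x, surface_boundary vert tris x <-> polygon_set P x) -> (0 < length P)%nat ->
  boundary_from vert tris (same_comp tris a0) (pvert P 0) ->
  forall x, polygon_set P x -> boundary_from vert tris (same_comp tris a0) x.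
Proof.
  intros HS HB HP H0.
  set (A := boundary_from vert tris (same_comp tris a0)).
  set (B := boundary_from vert tris (fun a => ~ same_comp tris a0 a)).
  assert (Hsplit : forall x, polygon_set P x -> A x \/ B x).
  { intros x Hx. apply HB in Hx as [a [b [n [E S]]]].
    destruct (classic (same_comp tris a0 a)); [left|right]; exists a, b; auto. }
  assert (Hedge : forall i, A (pvert P i) -> forall s, 0 <= s <= 1 ->
            A (linept (pvert P i) (pvert P (S i)) s)).
  { intros i Hi.
    apply (unit_interval_connected (fun s => A (linept (pvert P i) (pvert P (S i)) s))
                                   (fun s => B (linept (pvert P i) (pvert P (S i)) s)));
      try (apply (closedR_boundary_from_linept nv); auto).
    - intros s Hs. apply Hsplit. exists (i mod length P)%nat. split.
      + apply Nat.mod_upper_bound; lia.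
      + destruct (pvert_mod P i) as [-> ->]. apply linept_in_seg; auto.
    - intros s _ Ha Hb. eapply boundary_from_comp_disjoint; eauto.
    - rewrite linept0. auto. }
  assert (Hall : forall i, A (pvert P i)).
  { induction i; auto. rewrite <- (linept1 (pvert P i)). apply Hedge; auto; lra. }
  intros x [i [Hi Hx]]. apply in_seg_iff in Hx as [l [Hl ->]]. apply Hedge; auto.
Qed.

Open Scope nat_scope.

(** * The component as a surface of its own *)

Definition map_tri (h : nat -> nat) (T : nat * nat * nat) : nat * nat * nat :=
  match T with (a, b, c) => (h a, h b, h c) end.

Lemma tri_list_map_tri h T : tri_list (map_tri h T) = map h (tri_list T).
Proof. destruct T as [[a b] c]; reflexivity. Qed.

Lemma dir_edges_map_tri h T o : dir_edges (map_tri h T) o =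
  map (fun e => (h (fst e), h (snd e))) (dir_edges T o).
Proof. destruct T as [[x y] z]; destruct o; reflexivity. Qed.

Lemma dir_edges_tri_has T o x y : In (x, y) (dir_edges T o) ->
  tri_has T x = true /\ tri_has T y = true.
Proof.
  destruct T as [[p q] r]; rewrite !tri_has3; destruct o; simpl;
  intros H; repeat destruct H as [H|H]; try injection H as <- <-; tauto.
Qed.

Section Component.
Variables (nv : nat) (vert : nat -> pt) (tris : list (nat * nat * nat)) (a0 : nat).
Hypothesis HS : is_tri_surface nv vert tris.

Definition in_comp (v : nat) : Prop := v < nv /\ same_comp tris a0 v.

(* The vertices of the component, renumbered [0 .. comp_nv - 1] in increasing order. *)
Definition comp_vertices : list nat := filter (same_compb tris a0) (seq 0 nv).
Definition comp_nv : nat := length comp_vertices.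
Definition comp_unrank (i : nat) : nat := nth i comp_vertices 0.
Definition comp_rank (v : nat) : nat := length (filter (same_compb tris a0) (seq 0 v)).
Definition comp_vert (i : nat) : pt := vert (comp_unrank i).
Definition comp_surface_tris : list (nat * nat * nat) :=
  map (map_tri comp_rank) (comp_tris tris a0).

Lemma comp_rank_spec v : in_comp v -> comp_rank v < comp_nv /\ comp_unrank (comp_rank v) = v.
Proof.
  intros [Hv Hc]. unfold comp_nv, comp_unrank, comp_rank, comp_vertices.
  replace nv with (v + S (nv - v - 1)) by lia.
  rewrite seq_app. simpl. rewrite filter_app. simpl.
  rewrite (proj2 (same_compb_iff tris a0 v) Hc), length_app. simpl. split; [lia|].
  rewrite app_nth2, Nat.sub_diag; auto.
Qed.

Lemma comp_unrank_spec i : i < comp_nv -> in_comp (comp_unrank i) /\ comp_rank (comp_unrank i) = i.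
Proof.
  intros Hi. assert (Hin : In (comp_unrank i) comp_vertices) by (apply nth_In; auto).
  apply filter_In in Hin as [Hs Hc]. apply in_seq in Hs.
  assert (HU : in_comp (comp_unrank i)) by (split; [lia|apply same_compb_iff; auto]).
  split; auto. destruct (comp_rank_spec _ HU) as [Hlt He].
  apply (NoDup_nth comp_vertices 0); auto. apply NoDup_filter, seq_NoDup.
Qed.

Lemma comp_rank_inj u v : in_comp u -> in_comp v -> comp_rank u = comp_rank v -> u = v.
Proof.
  intros Hu Hv E. rewrite <- (proj2 (comp_rank_spec u Hu)), <- (proj2 (comp_rank_spec v Hv)), E.
  reflexivity.
Qed.

Lemma comp_unrank_inj i j : i < comp_nv -> j < comp_nv -> comp_unrank i = comp_unrank j -> i = j.
Proof.
  intros Hi Hj E. rewrite <- (proj2 (comp_unrank_spec i Hi)), <- (proj2 (comp_unrank_spec j Hj)), E.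
  reflexivity.
Qed.

Lemma comp_tris_in_comp T w : In T (comp_tris tris a0) -> tri_has T w = true -> in_comp w.
Proof.
  intros HT Hw. split; [|eapply comp_tris_vertex; eauto].
  apply In_comp_tris in HT as [HT _]. eapply surface_vertex_lt; eauto.
Qed.

Lemma tri_has_map_comp_rank_iff T i : In T (comp_tris tris a0) ->
  tri_has (map_tri comp_rank T) i = true <-> i < comp_nv /\ tri_has T (comp_unrank i) = true.
Proof.
  intros HT. assert (HU : forall w, tri_has T w = true -> in_comp w)
    by (intros; eapply comp_tris_in_comp; eauto).
  destruct T as [[a b] c]. simpl.
  destruct (comp_rank_spec a) as [la ea]; [apply HU, tri_has3; auto|].
  destruct (comp_rank_spec b) as [lb eb]; [apply HU, tri_has3; auto|].
  destruct (comp_rank_spec c) as [lc ec]; [apply HU, tri_has3; auto|].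
  rewrite !tri_has3. split.
  - intros [->|[->| ->]]; rewrite ?ea, ?eb, ?ec; auto.
  - intros [Hi Hm]. rewrite <- (proj2 (comp_unrank_spec i Hi)).
    destruct Hm as [->|[->| ->]]; auto.
Qed.

Lemma tri_has_map_comp_rank T u : In T (comp_tris tris a0) -> in_comp u ->
  tri_has (map_tri comp_rank T) (comp_rank u) = tri_has T u.
Proof.
  intros HT Hu. destruct (comp_rank_spec _ Hu) as [Hl E]. apply eq_true_iff_eq.
  rewrite tri_has_map_comp_rank_iff, E by auto. tauto.
Qed.

Lemma comp_edge_count_pos a b : 0 < edge_count comp_surface_tris a b ->
  a < comp_nv /\ b < comp_nv.
Proof.
  intros H. apply edge_count_pos_iff in H as [T' [HT' [Ha Hb]]].
  apply in_map_iff in HT' as [T [<- HT]].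
  apply tri_has_map_comp_rank_iff in Ha, Hb; auto. tauto.
Qed.

Lemma comp_edge_count a b : a < comp_nv -> b < comp_nv ->
  edge_count comp_surface_tris a b = edge_count (comp_tris tris a0) (comp_unrank a) (comp_unrank b).
Proof.
  intros Ha Hb. unfold edge_count, comp_surface_tris.
  rewrite filter_map_swap, length_map. f_equal. apply filter_ext_in. intros T HT.
  apply eq_true_iff_eq. rewrite !andb_true_iff, !tri_has_map_comp_rank_iff by auto. tauto.
Qed.

Lemma map_comp_vert_rank l : (forall u, In u l -> in_comp u) ->
  map comp_vert (map comp_rank l) = map vert l.
Proof.
  intros H. rewrite map_map. apply map_ext_in. intros u Hu. unfold comp_vert.
  rewrite (proj2 (comp_rank_spec u (H u Hu))). reflexivity.
Qed.

Lemma common_verts_map_comp_rank T1 T2 : In T1 (comp_tris tris a0) -> In T2 (comp_tris tris a0) ->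
  common_verts (map_tri comp_rank T1) (map_tri comp_rank T2) = map comp_rank (common_verts T1 T2).
Proof.
  intros H1 H2. unfold common_verts. rewrite tri_list_map_tri, filter_map_swap. f_equal.
  apply filter_ext_in. intros u Hu. apply tri_has_map_comp_rank; auto.
  apply (comp_tris_in_comp T1); auto. apply tri_has_In; auto.
Qed.

Lemma In_comp_surface_tris T :
  In T (comp_tris tris a0) -> In (map_tri comp_rank T) comp_surface_tris.
Proof. apply in_map. Qed.

Lemma comp_surface_tris_nonempty T : In T tris -> tri_has T a0 = true -> comp_surface_tris <> [].
Proof.
  intros HT Ha E.
  pose proof (In_comp_surface_tris T (In_comp_tris_of_vertex tris a0 T a0 HT Ha (rt_refl _ _ a0)))
    as HT'.
  rewrite E in HT'. exact HT'.
Qed.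

Lemma comp_surface_tris_length : length comp_surface_tris <= length tris.
Proof. unfold comp_surface_tris, comp_tris. rewrite length_map. apply filter_length_le. Qed.

Lemma comp_surface_tris_wf a b c : In (a, b, c) comp_surface_tris ->
  a < comp_nv /\ b < comp_nv /\ c < comp_nv /\
  noncollinear (comp_vert a) (comp_vert b) (comp_vert c).
Proof.
  intros H. apply in_map_iff in H as [[[x y] z] [E HT]]. injection E as <- <- <-.
  destruct (comp_rank_spec x) as [lx ex]; [eapply comp_tris_in_comp; eauto; apply tri_has3; auto|].
  destruct (comp_rank_spec y) as [ly ey]; [eapply comp_tris_in_comp; eauto; apply tri_has3; auto|].
  destruct (comp_rank_spec z) as [lz ez]; [eapply comp_tris_in_comp; eauto; apply tri_has3; auto|].
  repeat split; auto. unfold comp_vert. rewrite ex, ey, ez.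
  apply In_comp_tris in HT as [HT _]. destruct HS as [HW _]. apply (HW x y z HT).
Qed.

Lemma comp_vert_inj u v : u < comp_nv -> v < comp_nv -> comp_vert u = comp_vert v -> u = v.
Proof.
  intros Hu Hv E. destruct (comp_unrank_spec u Hu) as [[? _] _].
  destruct (comp_unrank_spec v Hv) as [[? _] _].
  destruct HS as [_ [Hinj _]]. apply Hinj in E; auto. apply comp_unrank_inj; auto.
Qed.

Lemma comp_vertex_covered v : v < comp_nv ->
  exists T, In T comp_surface_tris /\ tri_has T v = true.
Proof.
  intros Hv. destruct (comp_unrank_spec v Hv) as [[Hl Hc] E].
  destruct HS as [_ [_ [Hcov _]]]. destruct (Hcov _ Hl) as [T [HT Ht]].
  assert (HT0 : In T (comp_tris tris a0)) by (eapply In_comp_tris_of_vertex; eauto).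
  exists (map_tri comp_rank T). split; [apply In_comp_surface_tris; auto|].
  rewrite <- E, tri_has_map_comp_rank; auto. split; auto.
Qed.

Definition tris_differ (T1 T2 : nat * nat * nat) : Prop := exists v, tri_has T1 v <> tri_has T2 v.

Lemma comp_surface_tris_distinct : pairwise_nth tris_differ (0, 0, 0) comp_surface_tris.
Proof.
  destruct HS as [_ [_ [_ [Hnd _]]]].
  apply ForallOrdPairs_pairwise_nth; [intros x y [w Hw]; exists w; auto|].
  apply ForallOrdPairs_map with (R := tris_differ).
  - apply ForallOrdPairs_filter, (pairwise_nth_ForallOrdPairs _ (0, 0, 0)).
    intros i j Hi Hj Hij. apply Hnd; auto.
  - intros T1 T2 H1 H2 [w Hw].
    assert (Uw : in_comp w).
    { destruct (tri_has T1 w) eqn:E1; [exact (comp_tris_in_comp T1 w H1 E1)|].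
      destruct (tri_has T2 w) eqn:E2; [exact (comp_tris_in_comp T2 w H2 E2)|congruence]. }
    exists (comp_rank w). rewrite !tri_has_map_comp_rank; auto.
Qed.

Lemma comp_surface_embedded T1 T2 : In T1 comp_surface_tris -> In T2 comp_surface_tris ->
  forall x, (in_hull (map comp_vert (tri_list T1)) x /\ in_hull (map comp_vert (tri_list T2)) x) <->
            in_hull (map comp_vert (common_verts T1 T2)) x.
Proof.
  intros H1 H2 x. apply in_map_iff in H1 as [T1' [<- H1]]. apply in_map_iff in H2 as [T2' [<- H2]].
  assert (HU : forall T u, In T (comp_tris tris a0) -> In u (tri_list T) -> in_comp u)
    by (intros T u HT Hu; apply (comp_tris_in_comp T u HT), tri_has_In; auto).
  assert (HU12 : forall u, In u (common_verts T1' T2') -> in_comp u).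
  { intros u Hu. unfold common_verts in Hu. apply filter_In in Hu as [Hu _].
    exact (HU T1' u H1 Hu). }
  rewrite (common_verts_map_comp_rank T1' T2' H1 H2), !tri_list_map_tri, !map_comp_vert_rank;
    eauto.
  apply In_comp_tris in H1 as [H1 _]. apply In_comp_tris in H2 as [H2 _].
  destruct HS as [_ [_ [_ [_ [Hemb _]]]]]. apply Hemb; auto.
Qed.

Lemma comp_edge_count_le2 a b : a <> b -> edge_count comp_surface_tris a b <= 2.
Proof.
  intros nab. destruct (Nat.eq_dec (edge_count comp_surface_tris a b) 0) as [E|E]; [lia|].
  destruct (comp_edge_count_pos a b) as [Ha Hb]; [lia|].
  rewrite comp_edge_count by auto. eapply Nat.le_trans; [apply edge_count_comp_tris_le|].
  destruct HS as [_ [_ [_ [_ [_ [HE _]]]]]]. apply HE.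
  intros E'. apply comp_unrank_inj in E'; auto.
Qed.

Lemma comp_link_adj v a b : in_comp v -> link_adj tris v a b ->
  link_adj comp_surface_tris (comp_rank v) (comp_rank a) (comp_rank b).
Proof.
  intros Hv [T [HT [Hv' [Ha [Hb [nav [nbv nab]]]]]]].
  pose proof (In_comp_tris_of_vertex tris a0 T v HT Hv' (proj2 Hv)) as HT0.
  assert (Ua : in_comp a) by (eapply comp_tris_in_comp; eauto).
  assert (Ub : in_comp b) by (eapply comp_tris_in_comp; eauto).
  exists (map_tri comp_rank T). split; [apply In_comp_surface_tris; auto|].
  rewrite !tri_has_map_comp_rank by auto.
  repeat split; auto; intros E; apply comp_rank_inj in E; auto.
Qed.

Lemma comp_link_connected v x y : v < comp_nv -> v <> x -> v <> y ->
  0 < edge_count comp_surface_tris v x -> 0 < edge_count comp_surface_tris v y ->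
  clos_refl_trans _ (link_adj comp_surface_tris v) x y.
Proof.
  intros Hv nvx nvy Hx Hy.
  destruct (comp_edge_count_pos v x Hx) as [_ Hxl].
  destruct (comp_edge_count_pos v y Hy) as [_ Hyl].
  rewrite comp_edge_count in Hx, Hy by auto.
  pose proof (edge_count_comp_tris_le tris a0 (comp_unrank v) (comp_unrank x)).
  pose proof (edge_count_comp_tris_le tris a0 (comp_unrank v) (comp_unrank y)).
  destruct (comp_unrank_spec v Hv) as [[Hvl Hvc] Ev].
  destruct (comp_unrank_spec x Hxl) as [_ Ex]. destruct (comp_unrank_spec y Hyl) as [_ Ey].
  assert (Hr : clos_refl_trans _ (link_adj tris (comp_unrank v)) (comp_unrank x) (comp_unrank y)).
  { destruct HS as [_ [_ [_ [_ [_ [_ HL]]]]]].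
    apply HL; try lia; intros E'; apply comp_unrank_inj in E'; auto. }
  rewrite <- Ex, <- Ey, <- Ev.
  apply (clos_rt_map (link_adj tris (comp_unrank v)) _ comp_rank (fun _ => True)); auto.
  intros a b _ Hab. split; auto. apply comp_link_adj; auto. split; auto.
Qed.

Lemma comp_surface : is_tri_surface comp_nv comp_vert comp_surface_tris.
Proof.
  exact (conj comp_surface_tris_wf (conj comp_vert_inj (conj comp_vertex_covered
    (conj (fun i j => comp_surface_tris_distinct i j) (conj comp_surface_embedded
    (conj comp_edge_count_le2 comp_link_connected)))))).
Qed.

Lemma comp_tri_adj a b : same_comp tris a0 a -> tri_adj tris a b ->
  same_comp tris a0 b /\ tri_adj comp_surface_tris (comp_rank a) (comp_rank b).
Proof.
  intros Ha [T [HT [Ha' Hb']]].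
  assert (HT0 : In T (comp_tris tris a0)) by (apply (In_comp_tris_of_vertex tris a0 T a HT Ha' Ha)).
  split; [apply (same_comp_tri tris a0 T a b); auto|].
  exists (map_tri comp_rank T). split; [apply In_comp_surface_tris; auto|].
  rewrite !tri_has_map_comp_rank; auto; eapply comp_tris_in_comp; eauto.
Qed.

Lemma comp_surface_connected : connected_surface comp_nv comp_surface_tris.
Proof.
  intros a b Ha Hb. destruct (comp_unrank_spec a Ha) as [[_ Ca] Ea].
  destruct (comp_unrank_spec b Hb) as [[_ Cb] Eb]. rewrite <- Ea, <- Eb.
  apply (clos_rt_map (tri_adj tris) _ comp_rank (same_comp tris a0)); auto.
  - intros x y Hx Hxy. apply comp_tri_adj; auto.
  - eapply rt_trans; [apply clos_rt_sym; [|exact Ca]|exact Cb].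
    intros x y [T [? [? ?]]]. exists T; auto.
Qed.

Lemma comp_surface_boundary x : surface_boundary comp_vert comp_surface_tris x <->
  boundary_from vert tris (same_comp tris a0) x.
Proof.
  split.
  - intros [a [b [nab [E S]]]].
    destruct (comp_edge_count_pos a b) as [Ha Hb]; [lia|].
    destruct (comp_unrank_spec a Ha) as [[_ Ca] _].
    exists (comp_unrank a), (comp_unrank b).
    rewrite comp_edge_count, edge_count_comp_tris in E by auto.
    repeat split; auto. intros E'. apply comp_unrank_inj in E'; auto.
  - intros [a [b [Ca [nab [E S]]]]].
    destruct (proj1 (edge_count_pos_iff tris a b) ltac:(lia)) as [T [HT [Ha Hb]]].
    pose proof (In_comp_tris_of_vertex tris a0 T a HT Ha Ca) as HT0.
    assert (Ua : in_comp a) by (eapply comp_tris_in_comp; eauto).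
    assert (Ub : in_comp b) by (eapply comp_tris_in_comp; eauto).
    destruct (comp_rank_spec a Ua) as [la ea]. destruct (comp_rank_spec b Ub) as [lb eb].
    exists (comp_rank a), (comp_rank b).
    rewrite comp_edge_count, ea, eb, edge_count_comp_tris by auto. unfold comp_vert.
    rewrite ea, eb. repeat split; auto. intros E'. apply comp_rank_inj in E'; auto.
Qed.

Definition oriented_pair (p q : nat * nat * nat * bool) : Prop :=
  forall e, In e (dir_edges (fst p) (snd p)) -> ~ In e (dir_edges (fst q) (snd q)).

Lemma oriented_pair_sym p q : oriented_pair p q -> oriented_pair q p.
Proof. intros H e H1 H2. apply (H e); auto. Qed.

Lemma oriented_surface_pairs ts : oriented_surface ts ->
  exists C, map fst C = ts /\ ForallOrdPairs oriented_pair C.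
Proof.
  intros [o Ho]. set (os := map o (seq 0 (length ts))).
  assert (Hlen : length ts = length os) by (unfold os; rewrite length_map, length_seq; auto).
  exists (combine ts os). split; [apply map_fst_combine; auto|].
  apply (pairwise_nth_ForallOrdPairs _ ((0, 0, 0), false)).
  intros i j Hi Hj Hij. rewrite length_combine, <- Hlen, Nat.min_id in Hi, Hj.
  rewrite !combine_nth by auto.
  rewrite (nth_indep os (n:=i) false (o 0)), (nth_indep os (n:=j) false (o 0)) by lia.
  unfold os. rewrite !map_nth, !seq_nth by auto. intros e. apply Ho; auto.
Qed.

Lemma pairs_oriented_surface C : ForallOrdPairs oriented_pair C -> oriented_surface (map fst C).
Proof.
  intros HC. exists (fun i => snd (nth i C ((0, 0, 0), false))).
  intros i j Hi Hj Hij. rewrite length_map in Hi, Hj.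
  change (0, 0, 0) with (fst ((0, 0, 0), false) : nat * nat * nat). rewrite !map_nth.
  apply (ForallOrdPairs_pairwise_nth oriented_pair); auto using oriented_pair_sym.
Qed.

Lemma comp_surface_oriented : oriented_surface tris -> oriented_surface comp_surface_tris.
Proof.
  intros Ho. destruct (oriented_surface_pairs tris Ho) as [C [HCfst HC]].
  set (keep := fun p : nat * nat * nat * bool => same_compb tris a0 (fst (fst (fst p)))).
  set (relabel := fun p : nat * nat * nat * bool => (map_tri comp_rank (fst p), snd p)).
  assert (Hkeep : map fst (filter keep C) = comp_tris tris a0).
  { transitivity (filter (fun T => same_compb tris a0 (fst (fst T))) (map fst C));
      [apply (map_fst_filter (fun T => same_compb tris a0 (fst (fst T))))
      |rewrite HCfst; reflexivity]. }
  replace comp_surface_tris with (map fst (map relabel (filter keep C)))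
    by (unfold comp_surface_tris; rewrite <- Hkeep, !map_map; reflexivity).
  apply pairs_oriented_surface, (ForallOrdPairs_map oriented_pair);
    [apply ForallOrdPairs_filter; auto|].
  intros [T1 b1] [T2 b2] H1 H2 HR e He1 He2. unfold relabel in *; simpl in *.
  assert (I1 : In T1 (comp_tris tris a0)) by (rewrite <- Hkeep; apply (in_map fst _ _ H1)).
  assert (I2 : In T2 (comp_tris tris a0)) by (rewrite <- Hkeep; apply (in_map fst _ _ H2)).
  rewrite dir_edges_map_tri in He1, He2.
  apply in_map_iff in He1 as [[x1 y1] [E1 D1]]. apply in_map_iff in He2 as [[x2 y2] [E2 D2]].
  simpl in E1, E2. rewrite <- E2 in E1. injection E1 as Ex Ey.
  destruct (dir_edges_tri_has _ _ _ _ D1) as [X1 Y1].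
  destruct (dir_edges_tri_has _ _ _ _ D2) as [X2 Y2].
  apply comp_rank_inj in Ex;
    [|exact (comp_tris_in_comp T1 x1 I1 X1)|exact (comp_tris_in_comp T2 x2 I2 X2)].
  apply comp_rank_inj in Ey;
    [|exact (comp_tris_in_comp T1 y1 I1 Y1)|exact (comp_tris_in_comp T2 y2 I2 Y2)].
  subst. apply (HR (x2, y2)); auto.
Qed.

End Component.

Lemma pvert0_in_polygon P : 0 < length P -> polygon_set P (pvert P 0).
Proof.
  intros HP. exists 0. split; auto.
  pose proof (linept_in_seg (pvert P 0) (pvert P 1) 0) as Hs. rewrite linept0 in Hs.
  apply Hs. lra.
Qed.

Lemma comp_seifert_surface nv vert tris P a0 : is_tri_surface nv vert tris ->
  oriented_surface tris -> (forall x, surface_boundary vert tris x <-> polygon_set P x) ->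
  (0 < length P)%nat -> boundary_from vert tris (same_comp tris a0) (pvert P 0) ->
  seifert_surface P (comp_nv nv tris a0) (comp_vert nv vert tris a0) (comp_surface_tris tris a0).
Proof.
  intros HS HO HB HP H0.
  split; [apply comp_surface; auto|split; [apply (comp_surface_oriented nv vert); auto|split]].
  - apply (comp_surface_connected nv vert); auto.
  - intros x. rewrite comp_surface_boundary by auto. split.
    + intros [a [b [_ Hab]]]. apply HB. exists a, b; auto.
    + apply polygon_in_comp_boundary with nv; auto.
Qed.

Theorem lemma3p1 (P : list pt) (g : Z) (nv : nat) (vert : nat -> pt)
    (tris : list (nat * nat * nat)) :
  embedded_polygon P ->
  is_knot_genus P g ->
  is_tri_surface nv vert tris ->
  oriented_surface tris ->
  (forall x, surface_boundary vert tris x <-> polygon_set P x) ->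
  (4 * g + 1 <= Z.of_nat (length tris))%Z.
Proof.
  intros HP [_ Hmin] HS HO HB.
  assert (HlP : (0 < length P)%nat) by (destruct HP as [H _]; lia).
  destruct (proj2 (HB (pvert P 0)) (pvert0_in_polygon P HlP)) as [a0 [b0 [nab [E0 S0]]]].
  assert (H0 : boundary_from vert tris (same_comp tris a0) (pvert P 0))
    by (exists a0, b0; repeat split; auto; apply rt_refl).
  destruct (proj1 (edge_count_pos_iff tris a0 b0) ltac:(lia)) as [T [HT [Ha _]]].
  pose proof (Hmin P _ _ _ (rst_refl _ _ P)
                (comp_seifert_surface nv vert tris P a0 HS HO HB HlP H0)).
  pose proof (genus1_bound _ _ _ (comp_surface nv vert tris a0 HS)
                (comp_surface_tris_nonempty tris a0 T HT Ha)).
  pose proof (comp_surface_tris_length tris a0).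
  lia.
Qed.
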